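(* Let $G$ be a connected finite simple graph with maximum degree $\Delta$. Then there exists an edge $e$ of $G$ with $|F(e)|=\Delta^2-1$ if and only if $G\in\mathcal{G}_\Delta$.
   Context: $N(w)$ is the open neighborhood of a vertex $w$. Two distinct edges $e,f$ are $1$-neighbors if they share an endvertex, and $2$-neighbors if they share no endvertex but some edge of $G$ shares an endvertex with each of them. $N(e)$ is the set of $1$-neighbors of $e$. For a $2$-neighbor $f=xy$ of $e=uv$, let $c(e,f)$ be the number of edges of $G$ joining a vertex of $\{u,v\}$ to a vertex of $\{x,y\}$. The $2$-neighbor $f$ is of Type 6 (relative to $e$) if $c(e,f)=1$; $T_6(e)$ is the set of such $f$. $F(e)=N(e)\cup(N^2(e)\setminus T_6(e))$, where $N^2(e)$ is the set of all $2$-neighbors of $e$; i.e. $F(e)$ consists of the $1$-neighbors of $e$ together with those $2$-neighbors $f$ of $e$ that are joined to $e$ by at least two edges. For a positive integer $p$, $\mathcal{G}_p$ is the family of $p$-regular graphs on $2p$ vertices containing an edge $uv$ with $N(u)\cup N(v)=V(G)$. *)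

(* A finite simple graph is a symmetric irreflexive relation
   g : rel T on a finType T; edges are 2-element vertex sets {u,v} with g u v. *)
From mathcomp Require Import all_boot.
Set Implicit Arguments. Unset Strict Implicit. Unset Printing Implicit Defensive.

Section Graph.
Variables (T : finType) (g : rel T).

Definition edges : {set {set T}} :=
  [set E : {set T} | [exists u, exists v, g u v && (E == [set u; v])]].

Definition nbhd (w : T) : {set T} := [set x | g w x].

Definition deg (w : T) : nat := #|nbhd w|.

Definition maxdeg : nat := \max_(w : T) deg w.

Definition meet (E F : {set T}) : bool := E :&: F != set0.

Definition N1 (E : {set T}) : {set {set T}} :=
  [set F in edges | (F != E) && meet E F].

Definition N2 (E : {set T}) : {set {set T}} :=
  [set F in edges | [&& F != E, ~~ meet E F &
     [exists H in edges, meet H E && meet H F]]].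

(* c(e,f): number of edges joining a vertex of e to a vertex of f
   (for disjoint e, f these are exactly the edges meeting both). *)
Definition cnt (E F : {set T}) : nat :=
  #|[set H in edges | [exists x in E, exists y in F, H == [set x; y]]]|.

Definition T6 (E : {set T}) : {set {set T}} :=
  [set F in N2 E | cnt E F == 1].

Definition Fset (E : {set T}) : {set {set T}} := N1 E :|: (N2 E :\: T6 E).

Definition regular (p : nat) : Prop := forall w, deg w = p.

Definition in_Gp (p : nat) : Prop :=
  [/\ 0 < p, regular p, #|T| = 2 * p &
     exists u v, g u v /\ nbhd u :|: nbhd v = [set: T]].

End Graph.

(* Let e = uv.  Each 1-neighbour h = wx of e (w in e, x outside) joins e to at most
   Delta - 1 of its 2-neighbours, namely the edges xz with z outside e; double counting
   the pairs (h, f) with h joining e to f gives sum_{f in N2(e)} c(e,f) <= |N(e)| (Delta - 1).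
   As c(e,f) >= 1, and c(e,f) >= 2 off T6(e), while |N(e)| <= 2 (Delta - 1), this bounds
   |F(e)| = |N(e)| + |N2(e) \ T6(e)| by Delta^2 - 1, with equality exactly when
   |N(e)| = 2 (Delta - 1), every h has Delta - 1 such f and every c(e,f) = 2.  The
   equality case says that every neighbour of u or v has degree Delta and is adjacent to
   exactly one of u, v, and that N(u) \cup N(v) is closed under adjacency; by
   connectivity it is all of V(G), which is the description of G_Delta. *)

From mathcomp Require Import all_boot zify.
Set Implicit Arguments. Unset Strict Implicit. Unset Printing Implicit Defensive.

Lemma card_set_in_sumb (I : finType) (A : {set I}) (P : pred I) :
  #|[set z in A | P z]| = \sum_(z in A) P z.
Proof.
rewrite -sum1_card big_mkcond [RHS]big_mkcond; apply: eq_bigr => z _.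
by rewrite inE; case: (z \in A); case: (P z).
Qed.

Section FiniteSets.
Variable I : finType.

Lemma double_count (J : finType) (A : {set I}) (B : {set J}) (R : I -> J -> bool) :
  \sum_(x in A) #|[set y in B | R x y]| = \sum_(y in B) #|[set x in A | R x y]|.
Proof.
under eq_bigr do rewrite card_set_in_sumb.
by rewrite exchange_big; apply: eq_bigr => y _; rewrite card_set_in_sumb.
Qed.

Lemma eq_in_leq_sum (A : {set I}) (F G : I -> nat) :
  {in A, forall i, F i <= G i} -> \sum_(i in A) G i <= \sum_(i in A) F i ->
  {in A, forall i, F i = G i}.
Proof.
move=> leFG leGF i iA.
have /leqif_sum eqFG : forall j, j \in A -> F j <= G j ?= iff (F j == G j).
  by move=> j /leFG /leqif_eq.
have /forall_inP/(_ i iA)/eqP// : [forall (j | j \in A), F j == G j].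
by rewrite -eqFG eqn_leq leGF leq_sum.
Qed.

Lemma sum_set2 (x y : I) (F : I -> nat) : x != y ->
  \sum_(z in [set x; y]) F z = F x + F y.
Proof. by move=> xy; rewrite big_setU1 ?big_set1 // inE. Qed.

Lemma set2_inj (x y a b : I) : x != y -> [set x; y] = [set a; b] ->
  (x = a /\ y = b) \/ (x = b /\ y = a).
Proof.
move=> xy exy.
have : x \in [set a; b] by rewrite -exy set21.
have : y \in [set a; b] by rewrite -exy set22.
rewrite !inE => /orP [] /eqP ey /orP [] /eqP ex; subst.
- by rewrite eqxx in xy.
- by right.
- by left.
- by rewrite eqxx in xy.
Qed.

Lemma set2_sub (a b x y : I) : x \in [set a; b] -> y \in [set a; b] -> x != y ->
  [set x; y] = [set a; b].
Proof.
by rewrite !inE => /orP [] /eqP -> /orP [] /eqP ->; rewrite ?eqxx // => _; apply: setUC.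
Qed.

Lemma meetP (A B : {set I}) : reflect (exists2 x, x \in A & x \in B) (meet A B).
Proof.
apply: (iffP (set0Pn _)) => [[x]|[x xA xB]]; first by rewrite inE => /andP []; exists x.
by exists x; rewrite inE xA xB.
Qed.

End FiniteSets.

(* n1, n2, m, s stand for |N(e)|, |N2(e)|, |N2(e) \ T6(e)| and sum_f c(e,f), d for Delta - 1. *)
Lemma Fset_count_arith n1 n2 m s d :
  n1 <= 2 * d -> m <= n2 -> n2 + m <= s -> s <= n1 * d -> n1 + m = d.+1 ^ 2 - 1 ->
  [/\ n1 = 2 * d, s = n1 * d, m = n2 & s = n2 * 2].
Proof.
have -> : d.+1 ^ 2 - 1 = d * d + 2 * d by rewrite -addn1 sqrnD; lia.
move=> n1_le m_le s_ge s_le nm.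
have : 2 * d * d.+2 <= n1 * d.+2 by nia.
rewrite leq_pmul2r // => n1_ge.
split; nia.
Qed.

Section Graph.
Variables (T : finType) (g : rel T).
Hypotheses (gsym : symmetric g) (girr : irreflexive g).

Definition joins (A B H : {set T}) : bool :=
  [exists a in A, exists b in B, H == [set a; b]].

Definition N2_via (E H : {set T}) : {set {set T}} := [set F in N2 g E | joins E F H].

Definition splits (u v : T) : Prop := forall y, g u y (+) g v y.

Lemma edgesP H : reflect (exists x y, g x y /\ H = [set x; y]) (H \in edges g).
Proof.
rewrite inE; apply: (iffP existsP) => [[x /existsP [y /andP [gxy /eqP ->]]]|[x [y [gxy ->]]]].
  by exists x, y.
by exists x; apply/existsP; exists y; rewrite gxy eqxx.
Qed.

Lemma edges_set2 x y : g x y -> [set x; y] \in edges g.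
Proof. by move=> gxy; apply/edgesP; exists x, y. Qed.

Lemma adj_neq x y : g x y -> x != y.
Proof. by move=> gxy; apply: contraTneq gxy => ->; rewrite girr. Qed.

Lemma leq_deg_maxdeg w : deg g w <= maxdeg g.
Proof. exact: (leq_bigmax (F := deg g)). Qed.

Lemma card_set2I_nbhd a x y : x != y -> #|[set x; y] :&: nbhd g a| = g a x + g a y.
Proof.
by move=> xy; rewrite /nbhd -setIdE card_set_in_sumb sum_set2.
Qed.

Lemma card_joins (A B : {set T}) : [disjoint A & B] ->
  #|[set H in edges g | joins A B H]| = \sum_(a in A) #|B :&: nbhd g a|.
Proof.
move=> dAB.
pose P := [set p in setX A B | g p.1 p.2].
have -> : [set H in edges g | joins A B H] = [set [set p.1; p.2] | p in P].
  apply/setP => H; rewrite inE; apply/andP/imsetP.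
  - case=> /edgesP [x [y [gxy ->]]] /existsP [a /andP [aA /existsP [b /andP [bB /eqP e]]]].
    exists (a, b) => //; rewrite !inE aA bB /=.
    by have [[<- <-]|[<- <-]] := set2_inj (adj_neq gxy) e; rewrite // gsym.
  - case=> [[a b]]; rewrite !inE /= => /andP [/andP [aA bB] gab] ->.
    split; apply/existsP; exists a; first by apply/existsP; exists b; rewrite gab eqxx.
    by rewrite aA; apply/existsP; exists b; rewrite bB eqxx.
rewrite card_in_imset.
  under [RHS]eq_bigr do rewrite /nbhd -setIdE card_set_in_sumb.
  by rewrite card_set_in_sumb pair_big; apply: eq_bigl => -[a b]; rewrite !inE.
move=> [a b] [a' b']; rewrite !inE /= => /andP [/andP [aA bB] gab] /andP [/andP [aA' bB'] _] e.
have [[-> ->]|[ea eb]] := set2_inj (adj_neq gab) e; first by [].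
by move: dAB; rewrite disjoint_subset => /subsetP /(_ _ aA); rewrite ea inE bB'.
Qed.

Section Edge.
Variables (u v : T).
Hypothesis huv : g u v.
Let E := [set u; v].
Local Notation d := (maxdeg g).-1.

Lemma maxdeg_gt0 : 0 < maxdeg g.
Proof. by apply: leq_trans (leq_deg_maxdeg u); apply/card_gt0P; exists v; rewrite inE. Qed.

Lemma sum_E (F : T -> nat) : \sum_(z in E) F z = F u + F v.
Proof. exact: sum_set2 (adj_neq huv). Qed.

Lemma deg_split y : deg g y = #|nbhd g y :\: E| + g y u + g y v.
Proof.
rewrite /deg -(cardsID E) -addnA addnC; congr (_ + _).
by rewrite setIC card_set2I_nbhd // adj_neq.
Qed.

Lemma adj_set2 w y : w \in E -> g w y -> g y u + g y v >= 1.
Proof.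
rewrite (gsym y u) (gsym y v) !inE => /orP [] /eqP -> gwy; rewrite gwy; lia.
Qed.

Lemma out_deg_le w y : w \in E -> g w y -> #|nbhd g y :\: E| <= d.
Proof.
move=> wE gwy; have := adj_set2 wE gwy.
have := leq_deg_maxdeg y; rewrite deg_split; lia.
Qed.

Lemma out_deg_max w y : w \in E -> g w y -> #|nbhd g y :\: E| = d ->
  deg g y = maxdeg g /\ g u y (+) g v y.
Proof.
move=> wE gwy outy; have := adj_set2 wE gwy; have := leq_deg_maxdeg y.
rewrite deg_split outy (gsym u) (gsym v).
by case: (g y u); case: (g y v) => /=; lia.
Qed.

Lemma N1_joins : N1 g E = [set H in edges g | joins E (~: E) H].
Proof.
apply/setP => H; rewrite [LHS]inE [RHS]inE; apply/andP/andP => -[He]; last first.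
  case/existsP=> a /andP [aE /existsP [b /andP [bE /eqP eH]]]; split=> //.
  rewrite inE in bE; apply/andP; split.
    by apply: contraNneq bE => eHE; rewrite -eHE eH set22.
  by apply/meetP; exists a; rewrite // eH set21.
case/andP=> HE /meetP [z zE zH]; split=> //.
move/edgesP: He zH HE => [x [y [gxy ->]]]; rewrite !inE => /orP [] /eqP ez HE; subst z.
- apply/existsP; exists x; rewrite zE; apply/existsP; exists y; rewrite eqxx andbT inE.
  by apply: contraNN HE => yE; rewrite (set2_sub zE yE (adj_neq gxy)).
- apply/existsP; exists y; rewrite zE; apply/existsP; exists x; rewrite setUC eqxx andbT inE.
  by apply: contraNN HE => xE; rewrite (set2_sub xE zE (adj_neq gxy)).
Qed.

Lemma card_N1 : #|N1 g E| = #|nbhd g u :\: E| + #|nbhd g v :\: E|.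
Proof.
rewrite N1_joins card_joins; last by rewrite -subsets_disjoint.
by rewrite sum_E !setDE ![~: E :&: _]setIC.
Qed.

Lemma N1P H : reflect (exists a b, [/\ a \in E, b \notin E, g a b & H = [set a; b]])
  (H \in N1 g E).
Proof.
rewrite N1_joins inE; apply: (iffP andP) => [[He]|[a [b [aE bE gab ->]]]]; last first.
  split; first exact: edges_set2.
  by apply/existsP; exists a; rewrite aE; apply/existsP; exists b; rewrite inE bE eqxx.
case/existsP=> a /andP [aE /existsP [b /andP [bE /eqP eH]]].
rewrite inE in bE; exists a, b; split=> //.
move/edgesP: He eH => [x [y [gxy ->]]] /(set2_inj (adj_neq gxy)) [[<- <-]|[<- <-]] //.
by rewrite gsym.
Qed.

Lemma N2P F : F \in N2 g E ->
  exists x y, [/\ g x y, x \notin E, y \notin E & F = [set x; y]].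
Proof.
rewrite inE => /andP [/edgesP [x [y [gxy ->]]] /and3P [_ nmeet _]].
exists x, y; split=> //; apply: contraNN nmeet => zE; apply/meetP.
- by exists x; rewrite ?set21.
- by exists y; rewrite ?set22.
Qed.

Lemma set2_in_N2 w x y : w \in E -> g w x -> g x y -> x \notin E -> y \notin E ->
  [set x; y] \in N2 g E.
Proof.
move=> wE gwx gxy xE yE; rewrite inE edges_set2 //=; apply/and3P; split.
- by apply: contraNneq xE => <-; rewrite set21.
- apply/meetP => -[z zE]; rewrite !inE => /orP [] /eqP ez.
  + by rewrite -ez zE in xE.
  + by rewrite -ez zE in yE.
- apply/existsP; exists [set w; x]; rewrite edges_set2 //=.
  by apply/andP; split; apply/meetP; [exists w | exists x]; rewrite ?set21 ?set22.
Qed.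

Lemma joins_N2_N1 H F : H \in edges g -> F \in N2 g E -> joins E F H -> H \in N1 g E.
Proof.
move=> He /N2P [x [y [_ xE yE ->]]] /existsP [a /andP [aE /existsP [b /andP [bF /eqP eH]]]].
rewrite N1_joins inE He; apply/existsP; exists a; rewrite aE; apply/existsP; exists b.
by rewrite eH eqxx andbT inE; case/set2P: bF => ->.
Qed.

Lemma N2_via_set2 w x : w \in E -> x \notin E -> g w x ->
  N2_via E [set w; x] = [set [set x; z] | z in nbhd g x :\: E].
Proof.
move=> wE xE gwx; apply/setP => F; rewrite inE; apply/andP/imsetP.
- case=> /N2P [p [q [gpq pE qE ->]]] /existsP [a /andP [aE /existsP [b /andP [bF /eqP e]]]].
  have [[_ eb]|[_ ea]] := set2_inj (adj_neq gwx) e; last by rewrite ea aE in xE.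
  move: bF; rewrite -eb => /set2P [exp|exq].
  + by exists q; [rewrite in_setD qE inE exp | rewrite exp].
  + by exists p; [rewrite in_setD pE inE exq gsym | rewrite exq setUC].
- case=> z /setDP [gxz zE] ->; rewrite inE in gxz.
  split; first exact: set2_in_N2 wE gwx gxz xE zE.
  by apply/existsP; exists w; rewrite wE; apply/existsP; exists x; rewrite set21 eqxx.
Qed.

Lemma card_N2_via_set2 w x : w \in E -> x \notin E -> g w x ->
  #|N2_via E [set w; x]| = #|nbhd g x :\: E|.
Proof.
move=> wE xE gwx; rewrite N2_via_set2 // card_in_imset // => z z' /setDP [gxz _] _ e.
rewrite inE in gxz.
by have [[_ ->]|[_ ezx]] := set2_inj (adj_neq gxz) e; last by rewrite ezx girr in gxz.
Qed.

Lemma card_N2_via_le H : H \in N1 g E -> #|N2_via E H| <= d.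
Proof. by case/N1P=> a [b [aE bE gab ->]]; rewrite card_N2_via_set2 // (out_deg_le aE). Qed.

Lemma cnt_set2 x y : x \notin E -> y \notin E -> x != y ->
  cnt g E [set x; y] = g u x + g u y + (g v x + g v y).
Proof.
move=> xE yE xy; rewrite /cnt card_joins; last first.
  rewrite disjoint_subset; apply/subsetP => z zE; rewrite !inE.
  by apply/orP => -[] /eqP ez; rewrite -ez zE in xE yE.
by rewrite sum_E !card_set2I_nbhd.
Qed.

Lemma cnt_gt0 F : F \in N2 g E -> 0 < cnt g E F.
Proof.
move=> FN2; have [x [y [_ xE yE eF]]] := N2P FN2.
move: (FN2); rewrite inE => /andP [_ /and3P [_ _ /exists_inP [H He]]].
case/andP=> /meetP [z zH zE] /meetP [z' zH' zF].
rewrite /cnt card_gt0; apply/set0Pn; exists H; rewrite inE He.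
have zz' : z != z'.
  by apply: contraTneq zF => <-; rewrite eF; apply/set2P => -[] ez; rewrite -ez zE in xE yE.
case/edgesP: He zH zH' => p [q [_ ->]] zH zH'.
apply/exists_inP; exists z => //; apply/exists_inP; exists z' => //.
by rewrite (set2_sub zH zH' zz').
Qed.

Lemma cnt_ge2 F : F \in N2 g E :\: T6 g E -> 1 < cnt g E F.
Proof.
case/setDP=> FN2 FT6; rewrite ltn_neqAle cnt_gt0 // andbT eq_sym.
by apply: contraNneq FT6 => cnt1; rewrite inE FN2 cnt1.
Qed.

Lemma sum_cnt_N2 : \sum_(F in N2 g E) cnt g E F = \sum_(H in N1 g E) #|N2_via E H|.
Proof.
transitivity (\sum_(H in edges g) #|N2_via E H|); first exact: double_count.
have N1_edges : N1 g E \subset edges g by apply/subsetP => H; rewrite inE => /andP [].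
rewrite (big_setID (N1 g E)) /= (setIidPr N1_edges) [X in _ + X]big1 ?addn0 //.
move=> H /setDP [He HN1]; apply: eq_card0 => F; rewrite [LHS]inE [RHS]inE.
by apply: contraNF HN1 => /andP [FN2 FH]; apply: joins_N2_N1 He FN2 FH.
Qed.

Lemma leq_N2_sum_cnt : #|N2 g E| + #|N2 g E :\: T6 g E| <= \sum_(F in N2 g E) cnt g E F.
Proof.
rewrite (big_setID (T6 g E)) -(cardsID (T6 g E) (N2 g E)) -addnA addnn -muln2.
apply: leq_add; first by rewrite -sum1_card; apply: leq_sum => F /setIP [FN2 _]; apply: cnt_gt0.
by rewrite -sum_nat_const; apply: leq_sum => F; apply: cnt_ge2.
Qed.

Lemma card_Fset : #|Fset g E| = #|N1 g E| + #|N2 g E :\: T6 g E|.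
Proof.
rewrite cardsU (_ : _ :&: _ = set0) ?cards0 ?subn0 //.
apply/setP => H; rewrite in_setI in_setD in_set0.
case/boolP: (H \in N1 g E) => //; rewrite [H \in N1 _ _]inE => /andP [_ /andP [_ meetEH]].
by rewrite [H \in N2 _ _]inE meetEH /= !andbF.
Qed.

(* The equality case of the counting argument for |Fset g E|. *)
Definition extremal : Prop :=
  [/\ #|N1 g E| = 2 * d, {in N1 g E, forall H, #|N2_via E H| = d}
    & {in N2 g E, forall F, cnt g E F = 2}].

Lemma card_Fset_extremal : #|Fset g E| = (maxdeg g) ^ 2 - 1 -> extremal.
Proof.
rewrite -(prednK maxdeg_gt0) card_Fset => cardF.
have N1_le : #|N1 g E| <= 2 * d.
  rewrite card_N1 mul2n -addnn leq_add //.
    by apply: (out_deg_le (set22 u v)); rewrite gsym.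
  exact: (out_deg_le (set21 u v)).
have sum_le : \sum_(F in N2 g E) cnt g E F <= #|N1 g E| * d.
  by rewrite sum_cnt_N2 -sum_nat_const; apply: leq_sum => H; apply: card_N2_via_le.
have N2T6_le : #|N2 g E :\: T6 g E| <= #|N2 g E| by rewrite subset_leq_card ?subsetDl.
have [N1E sumE N2T6E sumE2] :=
  Fset_count_arith N1_le N2T6_le leq_N2_sum_cnt sum_le cardF.
split=> //.
- apply: eq_in_leq_sum => [H|]; first exact: card_N2_via_le.
  by rewrite sum_nat_const -sum_cnt_N2 sumE.
- have N2T6 : N2 g E :\: T6 g E = N2 g E by apply/eqP; rewrite eqEcard subsetDl N2T6E /=.
  suff cnt2 : {in N2 g E, forall F, 2 = cnt g E F} by move=> F /cnt2.
  apply: eq_in_leq_sum => [F FN2|]; first by apply: cnt_ge2; rewrite N2T6.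
  by rewrite sum_nat_const -sumE2.
Qed.

Lemma extremal_card_Fset : extremal -> #|Fset g E| = (maxdeg g) ^ 2 - 1.
Proof.
case=> N1E viaE cntE.
have sumE := sum_cnt_N2.
rewrite (eq_bigr _ cntE) (eq_bigr _ viaE) !sum_nat_const N1E in sumE.
have N2T6 : N2 g E :\: T6 g E = N2 g E.
  apply/setDidPl; rewrite disjoints_subset; apply/subsetP => F FN2.
  by rewrite in_setC [F \in T6 _ _]inE FN2 cntE.
rewrite card_Fset N2T6 N1E -(prednK maxdeg_gt0); nia.
Qed.

Lemma extremal_out_vertex w x : extremal -> w \in E -> x \notin E -> g w x ->
  deg g x = maxdeg g /\ g u x (+) g v x.
Proof.
case=> _ viaE _ wE xE gwx; apply: (out_deg_max wE gwx).
by rewrite -(card_N2_via_set2 wE xE gwx) viaE //; apply/N1P; exists w, x.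
Qed.

Lemma extremal_deg_uv : extremal -> deg g u = maxdeg g /\ deg g v = maxdeg g.
Proof.
case=> + _ _; have gvu : g v u by rewrite gsym.
have := out_deg_le (set22 u v) gvu; have := out_deg_le (set21 u v) huv.
rewrite card_N1 !deg_split !girr huv gvu; have := maxdeg_gt0; lia.
Qed.

Lemma extremal_nbhd_closed : extremal ->
  forall a b, g a b -> g u a || g v a -> g u b || g v b.
Proof.
move=> ext a b gab aW; case: (boolP (a \in E)) => [aE | aE].
  by move: gab; case/set2P: aE => -> ->; rewrite ?orbT.
have [w wE gwa] : exists2 w, w \in E & g w a.
  by case/orP: aW => ?; [exists u | exists v]; rewrite ?set21 ?set22.
case: (boolP (b \in E)) => [/set2P [] -> | bE]; first by rewrite gsym huv orbT.
  by rewrite huv.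
have [_ a_splits] := extremal_out_vertex ext wE aE gwa.
case: ext => _ _ /(_ _ (set2_in_N2 wE gwa gab aE bE)).
rewrite cnt_set2 ?adj_neq //; move: a_splits.
by case: (g u a); case: (g v a); case: (g u b); case: (g v b).
Qed.

Lemma extremal_regular_splits : (forall x y, connect g x y) -> extremal ->
  regular g (maxdeg g) /\ splits u v.
Proof.
move=> gconn ext; have [du dv] := extremal_deg_uv ext.
have cover_closed : closed g [pred y | g u y || g v y].
  by move=> a b gab; apply/idP/idP; apply: extremal_nbhd_closed; rewrite // gsym.
have covered y : g u y || g v y.
  by move: (closed_connect cover_closed (gconn v y)); rewrite !inE huv => <-.
have out y : y \notin E -> deg g y = maxdeg g /\ g u y (+) g v y.
  move=> yE; have [w wE gwy] : exists2 w, w \in E & g w y.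
    by case/orP: (covered y) => ?; [exists u | exists v]; rewrite ?set21 ?set22.
  exact: extremal_out_vertex ext wE yE gwy.
split=> y; case: (boolP (y \in E)) => [/set2P [] -> | /out []] //.
- by rewrite girr gsym huv.
- by rewrite girr huv.
Qed.

Lemma regular_splits_extremal : regular g (maxdeg g) -> splits u v -> extremal.
Proof.
move=> reg uv_splits.
have out_deg y : #|nbhd g y :\: E| = d.
  have := deg_split y; rewrite reg (gsym y u) (gsym y v); have := maxdeg_gt0.
  by have := uv_splits y; case: (g u y); case: (g v y) => //= _; lia.
split.
- by rewrite card_N1 !out_deg mul2n addnn.
- by move=> H /N1P [a [b [aE bE gab ->]]]; rewrite card_N2_via_set2.
- move=> F /N2P [x [y [gxy xE yE ->]]]; rewrite cnt_set2 ?adj_neq //.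
  have := uv_splits x; have := uv_splits y.
  by case: (g u x); case: (g v x); case: (g u y); case: (g v y).
Qed.

End Edge.

Lemma regular_splits_in_Gp u v p : g u v -> regular g p -> splits u v -> in_Gp g p.
Proof.
move=> huv reg uv_splits.
have cover : nbhd g u :|: nbhd g v = [set: T].
  by apply/setP => y; rewrite !inE; move: (uv_splits y); case: (g u y).
have disj : nbhd g u :&: nbhd g v = set0.
  by apply/setP => y; rewrite !inE; move: (uv_splits y); case: (g u y); case: (g v y).
have [du dv] := (reg u, reg v); rewrite /deg in du dv.
split=> //; last by exists u, v.
- by rewrite -du; apply/card_gt0P; exists v; rewrite inE.
- by rewrite -cardsT -cover cardsU disj cards0 subn0 du dv addnn mul2n.
Qed.

Lemma regular_cover_splits u v p : regular g p -> #|T| = 2 * p ->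
  nbhd g u :|: nbhd g v = [set: T] -> splits u v.
Proof.
move=> reg cardT cover y.
have disj : nbhd g u :&: nbhd g v = set0.
  apply/eqP; rewrite -cards_eq0; have := subset_leq_card (subsetIl (nbhd g u) (nbhd g v)).
  have := cardsU (nbhd g u) (nbhd g v); rewrite cover cardsT cardT.
  by move: (reg u) (reg v); rewrite /deg => -> ->; lia.
have := in_setT y; rewrite -cover; have := in_set0 y; rewrite -disj !inE.
by case: (g u y); case: (g v y).
Qed.

End Graph.

Theorem lemma3 (T : finType) (g : rel T) (gsym : symmetric g)
  (girr : irreflexive g) (gconn : forall x y : T, connect g x y) :
  (exists2 E, E \in edges g & #|Fset g E| = (maxdeg g) ^ 2 - 1) <->
  in_Gp g (maxdeg g).
Proof.
split.
- case=> _ /edgesP [u [v [huv ->]]] /(card_Fset_extremal gsym girr huv) ext.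
  have [reg uv_splits] := extremal_regular_splits gsym girr huv gconn ext.
  exact: regular_splits_in_Gp huv reg uv_splits.
- case=> _ reg cardT [u [v [huv cover]]].
  exists [set u; v]; first exact: edges_set2.
  apply: (extremal_card_Fset girr huv).
  apply: (regular_splits_extremal gsym girr huv reg).
  exact: regular_cover_splits reg cardT cover.
Qed.
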